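(* Let $\xi\in\mathbb R$ and let $(c_k)_{k\in\mathbb Z}$ be complex numbers with $|c_k|\le Ce^{-\delta|k|}$ for all $k$, for some $C,\delta>0$. Then for every $0<\varepsilon<\delta/2$ the series $\sum_{k\in\mathbb Z}c_k\rho_{\xi,k}$ converges in $H(S_{\delta/2-\varepsilon})$, i.e. uniformly on each set $\{z\in S_{\delta/2-\varepsilon}:|z|\le n\}$, $n\ge1$.
   Context: $\rho_1(z)=z\int_0^z e^{-s^2}ds$ is entire and even, so there is an entire $\rho_2$ with $\rho_1(z)=\rho_2(z^2)$. For $\xi\in\mathbb R$, $k\in\mathbb Z$, $\rho_{\xi,k}(z)=\frac2\pi\big(2e^{(\xi+ik)z}\rho_2((\xi+ik)z)+1\big)$. $S_\eta=\{z\in\mathbb C:|\operatorname{Im}z|\le\eta\}$; $H(\Omega)$ denotes the Fréchet space of holomorphic functions on $\Omega$ with seminorms $\|f\|_n=\sup\{|f(z)|:z\in\Omega,|z|\le n\}$. *)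

From Stdlib Require Import Reals ZArith ClassicalEpsilon.
From Coquelicot Require Import Coquelicot.
Open Scope R_scope.

Definition cexp (z : C) : C :=
  (exp (Re z) * cos (Im z), exp (Re z) * sin (Im z)).

(* erf-type integral along the segment [0,z]:
   int_0^z e^{-s^2} ds = int_0^1 z e^{-(t z)^2} dt  (entire integrand, so path-independent). *)
Definition cint_gauss (z : C) : C :=
  RInt (V := C_R_CompleteNormedModule)
       (fun t : R => Cmult z (cexp (Copp (Cmult (Cmult (RtoC t) z) (Cmult (RtoC t) z))))) 0 1.

Definition rho1 (z : C) : C := Cmult z (cint_gauss z).

(* rho_2 is the entire function with rho_1(z) = rho_2(z^2); since rho_1 is even,
   rho_2(w) = rho_1(sqrt w) for any square root of w. *)
Definition csqrt_choice (w : C) : C :=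
  epsilon (inhabits (RtoC 0)) (fun z : C => Cmult z z = w).
Definition rho2 (w : C) : C := rho1 (csqrt_choice w).

Definition rho (xi : R) (k : Z) (z : C) : C :=
  let a := Cmult (xi, IZR k) z in
  Cmult (RtoC (2 / PI))
        (Cplus (Cmult (RtoC 2) (Cmult (cexp a) (rho2 a))) (RtoC 1)).

Fixpoint sum_pos (f : Z -> C) (N : nat) : C :=
  match N with
  | O => f 0%Z
  | S n => Cplus (sum_pos f n) (f (Z.of_nat (S n)))
  end.
Fixpoint sum_neg (f : Z -> C) (M : nat) : C :=
  match M with
  | O => RtoC 0
  | S m => Cplus (sum_neg f m) (f (Z.opp (Z.of_nat (S m))))
  end.
Definition bisum (f : Z -> C) (M N : nat) : C := Cplus (sum_neg f M) (sum_pos f N).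

(* Each term c_k rho_{xi,k} is dominated, uniformly on the truncated strip, by a geometric
   sequence.  The crude bound |int_0^u e^{-s^2} ds| <= |u| e^{|Re u^2|} gives
   |rho_2(w)| <= |w| e^{|Re w|}; for w = (xi + ik) z with |Im z| <= delta/2 - eps and
   |z| <= n this makes |rho_{xi,k}(z)| grow at most like (|xi| + |k|) n e^{2|xi|n}
   e^{(delta - 2 eps)|k|}.  Against |c_k| <= C e^{-delta |k|} there remains the decay
   e^{-2 eps |k|}, half of which absorbs the linear factor |k|.  So the m-th increments of
   both one-sided partial sums are bounded by A e^{-eps m} with A independent of z, and
   the partial sums converge uniformly with geometric tail bounds (Weierstrass M-test). *)
From Stdlib Require Import Reals ZArith Lra Lia Psatz ClassicalEpsilon.
From Coquelicot Require Import Coquelicot.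
Open Scope R_scope.

Lemma exp_le_exp (x y : R) : x <= y -> exp x <= exp y.
Proof. intros [Hlt | ->]; [now apply Rlt_le, exp_increasing | apply Rle_refl]. Qed.

Lemma exp_mul_INR (x : R) (m : nat) : exp (x * INR m) = exp x ^ m.
Proof.
  induction m as [|m IH]; [now rewrite Rmult_0_r, exp_0|].
  rewrite S_INR, Rmult_plus_distr_l, Rmult_1_r, exp_plus, IH; simpl; ring.
Qed.

Lemma exp_mul_IZR_abs (x : R) (k : Z) : exp (x * IZR (Z.abs k)) = exp x ^ Z.abs_nat k.
Proof. now rewrite <- exp_mul_INR, INR_IZR_INZ, Nat2Z.inj_abs_nat. Qed.

Lemma mul_exp_neg_le_inv (eps m : R) : 0 < eps -> m * exp (- eps * m) <= / eps.
Proof.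
  intros Heps.
  assert (Hp : 0 < exp (- eps * m)) by apply exp_pos.
  assert (Hinv : exp (- eps * m) * exp (eps * m) = 1)
    by now rewrite <- exp_plus, <- exp_0; f_equal; ring.
  pose proof (exp_ineq1_le (eps * m)).
  apply (Rmult_le_reg_l eps); [lra|]. rewrite Rinv_r by lra. nra.
Qed.

Lemma Cmult_self_surj (w : C) : exists z : C, Cmult z z = w.
Proof.
  destruct w as [a b].
  set (r := sqrt (a * a + b * b)).
  assert (Hrr : r * r = a * a + b * b) by (apply sqrt_sqrt; nra).
  assert (Hr0 : 0 <= r) by apply sqrt_pos.
  assert (Hr : Rabs a <= r) by (apply Rabs_le; split; nra).
  apply Rabs_le_between in Hr.
  set (x := sqrt ((r + a) / 2)); set (y := sqrt ((r - a) / 2)).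
  assert (Hx : x * x = (r + a) / 2) by (apply sqrt_sqrt; lra).
  assert (Hy : y * y = (r - a) / 2) by (apply sqrt_sqrt; lra).
  assert (Hxy : x * y = Rabs b / 2).
  { unfold x, y; rewrite <- sqrt_mult by lra.
    replace ((r + a) / 2 * ((r - a) / 2)) with (Rabs b / 2 * (Rabs b / 2)).
    - apply sqrt_square; pose proof (Rabs_pos b); lra.
    - assert (Rabs b * Rabs b = b * b) by (rewrite <- Rabs_mult; apply Rabs_pos_eq; nra).
      nra. }
  destruct (Rle_lt_dec 0 b) as [Hb | Hb].
  - exists (x, y); unfold Cmult; simpl.
    rewrite Rabs_pos_eq in Hxy by lra; f_equal; nra.
  - exists (x, - y); unfold Cmult; simpl.
    rewrite Rabs_left in Hxy by lra; f_equal; nra.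
Qed.

Lemma csqrt_choiceK (w : C) : Cmult (csqrt_choice w) (csqrt_choice w) = w.
Proof. exact (epsilon_spec _ (fun z : C => Cmult z z = w) (Cmult_self_surj w)). Qed.

Lemma Cmod_cexp (v : C) : Cmod (cexp v) = exp (Re v).
Proof.
  unfold cexp, Cmod; simpl.
  pose proof (sin2_cos2 (Im v)) as H; unfold Rsqr in H.
  set (e := exp (Re v)).
  replace (e * cos (Im v) * (e * cos (Im v) * 1) + e * sin (Im v) * (e * sin (Im v) * 1))
    with (e * e * (sin (Im v) * sin (Im v) + cos (Im v) * cos (Im v))) by ring.
  rewrite H, Rmult_1_r. apply sqrt_square, Rlt_le, exp_pos.
Qed.

Lemma Cmod_pair_le (a b : R) : Cmod (a, b) <= Rabs a + Rabs b.
Proof.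
  pose proof (Rabs_pos a); pose proof (Rabs_pos b).
  unfold Cmod; simpl.
  rewrite <- (sqrt_square (Rabs a + Rabs b)) by lra.
  apply sqrt_le_1_alt.
  assert (Rabs a * Rabs a = a * a) by (rewrite <- Rabs_mult; apply Rabs_pos_eq; nra).
  assert (Rabs b * Rabs b = b * b) by (rewrite <- Rabs_mult; apply Rabs_pos_eq; nra).
  nra.
Qed.

Lemma ex_RInt_C (f : R -> C) (a b : R) :
  ex_RInt (fun t => fst (f t)) a b -> ex_RInt (fun t => snd (f t)) a b ->
  ex_RInt (V := C_R_CompleteNormedModule) f a b.
Proof.
  intros [l1 H1] [l2 H2]. exists (l1, l2).
  apply (is_RInt_ext (V := C_R_CompleteNormedModule) (fun t => (fst (f t), snd (f t)))).
  - intros t _; now destruct (f t).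
  - now apply (is_RInt_fct_extend_pair (U := R_NormedModule) (V := R_NormedModule)).
Qed.

Definition gauss_integrand (u : C) (t : R) : C :=
  Cmult u (cexp (Copp (Cmult (Cmult (RtoC t) u) (Cmult (RtoC t) u)))).

Lemma ex_RInt_gauss_integrand (u : C) :
  ex_RInt (V := C_R_CompleteNormedModule) (gauss_integrand u) 0 1.
Proof.
  destruct u as [a b].
  apply ex_RInt_C; apply (ex_RInt_continuous (V := R_CompleteNormedModule));
    intros t _; apply (ex_derive_continuous (K := R_AbsRing) (V := R_NormedModule));
    unfold gauss_integrand, Cmult, cexp, Copp, RtoC, Re, Im; simpl; auto_derive; auto.
Qed.

Lemma Cmod_gauss_integrand_le (u : C) (t : R) : 0 <= t <= 1 ->
  Cmod (gauss_integrand u t) <= Cmod u * exp (Rabs (Re (Cmult u u))).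
Proof.
  intros Ht. unfold gauss_integrand.
  rewrite Cmod_mult, Cmod_cexp.
  apply Rmult_le_compat_l; [apply Cmod_ge_0|]. apply exp_le_exp.
  replace (Re (Copp (Cmult (Cmult (RtoC t) u) (Cmult (RtoC t) u))))
    with (- (t * t) * Re (Cmult u u))
    by (destruct u; unfold Copp, Cmult, RtoC, Re; simpl; ring).
  set (x := Re (Cmult u u)).
  pose proof (Rle_abs (- x)); rewrite Rabs_Ropp in *.
  pose proof (Rabs_pos x). assert (0 <= t * t <= 1) by nra. nra.
Qed.

Lemma Cmod_cint_gauss_le (u : C) :
  Cmod (cint_gauss u) <= Cmod u * exp (Rabs (Re (Cmult u u))).
Proof.
  replace (Cmod u * _) with ((1 - 0) * (Cmod u * exp (Rabs (Re (Cmult u u))))) by ring.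
  rewrite Cmod_norm.
  apply (norm_RInt_le_const (V := C_R_NormedModule) (gauss_integrand u) 0 1); [lra| |].
  - intros t Ht; rewrite <- Cmod_norm; now apply Cmod_gauss_integrand_le.
  - exact (RInt_correct _ _ _ (ex_RInt_gauss_integrand u)).
Qed.

Lemma Cmod_rho2_le (w : C) : Cmod (rho2 w) <= Cmod w * exp (Rabs (Re w)).
Proof.
  unfold rho2, rho1. pose proof (csqrt_choiceK w) as Hu.
  set (u := csqrt_choice w) in *.
  rewrite Cmod_mult, <- Hu, Cmod_mult, Rmult_assoc.
  apply Rmult_le_compat_l; [apply Cmod_ge_0 | apply Cmod_cint_gauss_le].
Qed.

Lemma two_div_PI_pos : 0 < 2 / PI.
Proof. apply Rdiv_lt_0_compat; [lra | apply PI_RGT_0]. Qed.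

Lemma Cmod_rho_le (xi : R) (k : Z) (z : C) :
  Cmod (rho xi k z) <=
    2 / PI * (2 * (Cmod (Cmult (xi, IZR k) z) * exp (2 * Rabs (Re (Cmult (xi, IZR k) z)))) + 1).
Proof.
  unfold rho. set (w := Cmult (xi, IZR k) z).
  pose proof two_div_PI_pos.
  rewrite Cmod_mult, Cmod_R, Rabs_pos_eq by lra.
  apply Rmult_le_compat_l; [lra|].
  eapply Rle_trans; [apply Cmod_triangle|]. rewrite Cmod_1.
  apply Rplus_le_compat_r.
  rewrite !Cmod_mult, Cmod_R, Rabs_pos_eq, Cmod_cexp by lra.
  apply Rmult_le_compat_l; [lra|].
  pose proof (Cmod_rho2_le w). pose proof (Cmod_ge_0 (rho2 w)).
  pose proof (exp_le_exp _ _ (Rle_abs (Re w))). pose proof (exp_pos (Re w)).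
  replace (2 * Rabs (Re w)) with (Rabs (Re w) + Rabs (Re w)) by ring.
  rewrite exp_plus, (Rmult_comm (Cmod w)), Rmult_assoc.
  apply Rmult_le_compat; lra.
Qed.

Lemma Cmod_rho_strip_le (xi : R) (k : Z) (z : C) (r d : R) :
  Rabs (Im z) <= d -> Cmod z <= r ->
  Cmod (rho xi k z) <=
    2 / PI * (2 * ((Rabs xi + IZR (Z.abs k)) * r
                   * exp (2 * Rabs xi * r + 2 * d * IZR (Z.abs k))) + 1).
Proof.
  intros Hd Hr. set (m := IZR (Z.abs k)).
  assert (Hm : Rabs (IZR k) = m) by apply Rabs_Zabs.
  pose proof (Rabs_pos xi). pose proof (Cmod_ge_0 z).
  assert (HRe : Rabs (Re (Cmult (xi, IZR k) z)) <= Rabs xi * r + d * m).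
  { pose proof (re_le_Cmod z). destruct z as [x y]; unfold Cmult, Re, Im in *; simpl in *.
    eapply Rle_trans; [apply Rabs_triang|].
    rewrite Rabs_Ropp, !Rabs_mult, Hm. pose proof (Rabs_pos y). pose proof (Rabs_pos x).
    assert (0 <= m) by (rewrite <- Hm; apply Rabs_pos). nra. }
  assert (Hw : Cmod (Cmult (xi, IZR k) z) <= (Rabs xi + m) * r).
  { rewrite Cmod_mult. pose proof (Cmod_pair_le xi (IZR k)). rewrite Hm in *.
    apply Rmult_le_compat; auto using Cmod_ge_0. }
  eapply Rle_trans; [apply Cmod_rho_le|].
  pose proof two_div_PI_pos.
  apply Rmult_le_compat_l; [lra|]. apply Rplus_le_compat_r, Rmult_le_compat_l; [lra|].
  apply Rmult_le_compat; auto using Cmod_ge_0, Rlt_le, exp_pos.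
  apply exp_le_exp; lra.
Qed.

Definition rho_majorant (xi Cc eps r : R) : R :=
  Cc * (2 / PI) * (2 * (Rabs xi + / eps) * r * exp (2 * Rabs xi * r) + 1).

Lemma rho_majorant_ge0 (xi Cc eps r : R) :
  0 <= Cc -> 0 < eps -> 0 <= r -> 0 <= rho_majorant xi Cc eps r.
Proof.
  intros HCc Heps Hr. unfold rho_majorant.
  pose proof two_div_PI_pos. pose proof (Rabs_pos xi).
  pose proof (exp_pos (2 * Rabs xi * r)). pose proof (Rinv_0_lt_compat eps Heps).
  assert (0 <= (Rabs xi + / eps) * r) by nra.
  apply Rmult_le_pos; nra.
Qed.

Lemma Cmod_coef_rho_le (xi Cc delta eps r : R) (c : Z -> C) (k : Z) (z : C) :
  0 <= Cc -> 0 < eps <= delta -> 0 <= r ->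
  Cmod (c k) <= Cc * exp (- delta * IZR (Z.abs k)) ->
  Rabs (Im z) <= delta / 2 - eps -> Cmod z <= r ->
  Cmod (Cmult (c k) (rho xi k z)) <= rho_majorant xi Cc eps r * exp (- eps) ^ Z.abs_nat k.
Proof.
  intros HCc Heps Hr Hck Hz Hzr.
  rewrite <- exp_mul_IZR_abs, Cmod_mult.
  set (m := IZR (Z.abs k)) in *.
  assert (Hm : 0 <= m) by (apply IZR_le, Z.abs_nonneg).
  set (a := Rabs xi); set (E := exp (2 * a * r)).
  set (p := exp (- eps * m)); set (D := exp (- delta * m)) in Hck.
  set (X := exp ((delta - 2 * eps) * m)).
  pose proof two_div_PI_pos as HPI. pose proof (Rabs_pos xi) as Ha; fold a in Ha.
  assert (HE : 0 < E) by apply exp_pos. assert (Hp : 0 < p) by apply exp_pos.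
  assert (Hrho : Cmod (rho xi k z) <= 2 / PI * (2 * ((a + m) * r * (E * X)) + 1)).
  { replace (E * X) with (exp (2 * a * r + 2 * (delta / 2 - eps) * m))
      by (unfold E, X; rewrite <- exp_plus; f_equal; field).
    now apply Cmod_rho_strip_le. }
  assert (HDX : D * X = p * p) by (unfold D, X, p; rewrite <- !exp_plus; f_equal; ring).
  assert (HDp : D <= p) by (apply exp_le_exp; nra).
  assert (Hp1 : p <= 1) by (rewrite <- exp_0; apply exp_le_exp; nra).
  assert (Hmp : m * p <= / eps) by (now apply mul_exp_neg_le_inv).
  assert (Hlin : (a + m) * (p * p) <= (a + / eps) * p).
  { assert (a * (p * p) <= a * p) by (apply Rmult_le_compat_l; nra).
    assert (m * p * p <= / eps * p) by (apply Rmult_le_compat_r; lra).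
    nra. }
  eapply Rle_trans; [apply Rmult_le_compat; eauto using Cmod_ge_0|].
  unfold rho_majorant; fold a E.
  replace (Cc * D * (2 / PI * (2 * ((a + m) * r * (E * X)) + 1)))
    with (Cc * (2 / PI) * (2 * r * E * ((a + m) * (D * X)) + D)) by ring.
  replace (Cc * (2 / PI) * (2 * (a + / eps) * r * E + 1) * p)
    with (Cc * (2 / PI) * (2 * r * E * ((a + / eps) * p) + p)) by ring.
  rewrite HDX. apply Rmult_le_compat_l; [nra|].
  apply Rplus_le_compat; [apply Rmult_le_compat_l; nra | exact HDp].
Qed.

Lemma geometric_tail_lt (B q e : R) : 0 <= q < 1 -> 0 < e ->
  exists N0 : nat, forall N, (N0 <= N)%nat -> B * q ^ N < e.
Proof.
  intros Hq He.
  pose proof (Rabs_pos B).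
  assert (Hy : 0 < e / (Rabs B + 1)) by (apply Rdiv_lt_0_compat; lra).
  destruct (pow_lt_1_zero q ltac:(rewrite Rabs_pos_eq; lra) _ Hy) as [N0 HN0].
  exists N0; intros N HN. specialize (HN0 N HN).
  rewrite Rabs_pos_eq in HN0 by (apply pow_le; lra).
  pose proof (Rle_abs B); pose proof (pow_le q N ltac:(lra)).
  apply (Rmult_lt_compat_l (Rabs B + 1)) in HN0; [|lra].
  replace ((Rabs B + 1) * (e / (Rabs B + 1))) with e in HN0 by (field; lra).
  nra.
Qed.

Section GeometricIncrements.

Variables (u : nat -> R) (A q : R).
Hypotheses (HA : 0 <= A) (Hq : 0 <= q < 1).
Hypothesis Hu : forall N, Rabs (u (S N) - u N) <= A * q ^ S N.

Lemma geometric_increments_cauchy (N M : nat) : (N <= M)%nat ->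
  Rabs (u M - u N) <= A / (1 - q) * q ^ S N.
Proof.
  assert (Htel : forall d,
             Rabs (u (d + N)%nat - u N) <= A * (q ^ S N - q ^ S (d + N)) / (1 - q)).
  { induction d as [|d IH].
    - rewrite Rminus_diag, Rabs_R0, Rminus_diag; unfold Rdiv; lra.
    - replace (u (S d + N)%nat - u N)
        with ((u (S (d + N)) - u (d + N)%nat) + (u (d + N)%nat - u N)) by (simpl; ring).
      eapply Rle_trans; [apply Rabs_triang|].
      eapply Rle_trans; [apply Rplus_le_compat; [apply Hu | apply IH]|].
      right; simpl; field; lra. }
  intros HNM. replace M with ((M - N) + N)%nat by lia.
  eapply Rle_trans; [apply Htel|].
  pose proof (pow_le q (S (M - N + N)) ltac:(lra)).
  replace (A / (1 - q) * q ^ S N) with (A * q ^ S N / (1 - q)) by (field; lra).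
  unfold Rdiv. apply Rmult_le_compat_r; [apply Rlt_le, Rinv_0_lt_compat; lra|]. nra.
Qed.

Lemma Lim_seq_geometric_error (N : nat) :
  Rabs (u N - real (Lim_seq u)) <= A / (1 - q) * q ^ S N.
Proof.
  assert (Hcauchy : ex_lim_seq_cauchy u).
  { intros e. destruct (geometric_tail_lt (A / (1 - q)) q (e / 2) Hq) as [N0 HN0].
    { pose proof (cond_pos e); lra. }
    exists N0; intros n m Hn Hm.
    replace (u n - u m) with ((u n - u N0) - (u m - u N0)) by ring.
    eapply Rle_lt_trans; [apply Rabs_triang|]. rewrite Rabs_Ropp.
    pose proof (geometric_increments_cauchy N0 n Hn).
    pose proof (geometric_increments_cauchy N0 m Hm).
    pose proof (HN0 (S N0) ltac:(lia)). lra. }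
  destruct (proj2 (ex_lim_seq_cauchy_corr u) Hcauchy) as [l Hl].
  rewrite (is_lim_seq_unique _ _ Hl); simpl.
  rewrite Rabs_minus_sym.
  apply (is_lim_seq_le_loc (fun M => Rabs (u M - u N)) (fun _ => A / (1 - q) * q ^ S N)
           (Rabs (l - u N)) (A / (1 - q) * q ^ S N)).
  - exists N; exact (geometric_increments_cauchy N).
  - apply (is_lim_seq_abs _ (l - u N)), is_lim_seq_minus'; [exact Hl | apply is_lim_seq_const].
  - apply is_lim_seq_const.
Qed.

End GeometricIncrements.

Definition Clim (s : nat -> C) : C :=
  (real (Lim_seq (fun n => fst (s n))), real (Lim_seq (fun n => snd (s n)))).

Lemma Clim_geometric_error (s : nat -> C) (A q : R) :
  0 <= A -> 0 <= q < 1 ->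
  (forall N, Cmod (Cminus (s (S N)) (s N)) <= A * q ^ S N) ->
  forall N, Cmod (Cminus (s N) (Clim s)) <= 2 * (A / (1 - q)) * q ^ S N.
Proof.
  intros HA Hq Hs N.
  pose proof (fun c : C => Rle_trans _ _ _ (Rmax_l _ _) (Rmax_Cmod c)) as Hfst.
  pose proof (fun c : C => Rle_trans _ _ _ (Rmax_r _ _) (Rmax_Cmod c)) as Hsnd.
  pose proof (Lim_seq_geometric_error (fun n => fst (s n)) A q HA Hq
                (fun N => Rle_trans _ _ _ (Hfst _) (Hs N)) N) as H1.
  pose proof (Lim_seq_geometric_error (fun n => snd (s n)) A q HA Hq
                (fun N => Rle_trans _ _ _ (Hsnd _) (Hs N)) N) as H2.
  eapply Rle_trans; [apply Cmod_2Rmax|].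
  assert (Hsqrt2 : sqrt 2 <= 2).
  { rewrite <- (sqrt_square 2) at 2 by lra. apply sqrt_le_1_alt; lra. }
  rewrite Rmult_assoc.
  apply Rmult_le_compat; [apply sqrt_pos | | exact Hsqrt2 | apply Rmax_lub; assumption].
  eapply Rle_trans; [apply Rabs_pos | apply Rmax_l].
Qed.

Lemma sum_pos_increment_le (g : Z -> C) (A q : R) :
  (forall k, Cmod (g k) <= A * q ^ Z.abs_nat k) ->
  forall m, Cmod (Cminus (sum_pos g (S m)) (sum_pos g m)) <= A * q ^ S m.
Proof.
  intros Hg m. replace (Cminus _ _) with (g (Z.of_nat (S m))) by (simpl; ring).
  rewrite <- (Zabs2Nat.id (S m)) at 2. apply Hg.
Qed.

Lemma sum_neg_increment_le (g : Z -> C) (A q : R) :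
  (forall k, Cmod (g k) <= A * q ^ Z.abs_nat k) ->
  forall m, Cmod (Cminus (sum_neg g (S m)) (sum_neg g m)) <= A * q ^ S m.
Proof.
  intros Hg m. replace (Cminus _ _) with (g (Z.opp (Z.of_nat (S m)))) by (simpl; ring).
  replace (S m) with (Z.abs_nat (Z.opp (Z.of_nat (S m)))) at 2 by lia. apply Hg.
Qed.

Theorem lemma5 (xi : R) (c : Z -> C) (Cc delta : R) :
  0 < Cc -> 0 < delta ->
  (forall k : Z, Cmod (c k) <= Cc * exp (- delta * IZR (Z.abs k))) ->
  forall eps : R, 0 < eps < delta / 2 ->
  exists F : C -> C,
    forall n : nat, (1 <= n)%nat ->
    forall eta : R, 0 < eta ->
    exists N0 : nat, forall M N : nat, (N0 <= M)%nat -> (N0 <= N)%nat ->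
      forall z : C, Rabs (Im z) <= delta / 2 - eps -> Cmod z <= INR n ->
        Cmod (Cminus (bisum (fun k => Cmult (c k) (rho xi k z)) M N) (F z)) < eta.
Proof.
  intros HCc Hdelta Hc eps Heps.
  exists (fun z => Cplus (Clim (sum_neg (fun k => Cmult (c k) (rho xi k z))))
                         (Clim (sum_pos (fun k => Cmult (c k) (rho xi k z))))).
  intros n _ eta Heta.
  set (A := rho_majorant xi Cc eps (INR n)).
  assert (HA : 0 <= A) by (apply rho_majorant_ge0; auto using pos_INR; lra).
  set (q := exp (- eps)).
  assert (Hq : 0 <= q < 1).
  { split; [apply Rlt_le, exp_pos | rewrite <- exp_0; apply exp_increasing; lra]. }
  destruct (geometric_tail_lt (2 * (A / (1 - q))) q (eta / 2) Hq) as [N0 HN0]; [lra|].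
  exists N0; intros M N HM HN z Hz Hzn.
  set (g := fun k => Cmult (c k) (rho xi k z)).
  assert (Hg : forall k, Cmod (g k) <= A * q ^ Z.abs_nat k)
    by (intros k; apply Cmod_coef_rho_le with delta; auto using pos_INR; lra).
  pose proof (Clim_geometric_error (sum_neg g) A q HA Hq (sum_neg_increment_le g A q Hg) M).
  pose proof (Clim_geometric_error (sum_pos g) A q HA Hq (sum_pos_increment_le g A q Hg) N).
  pose proof (HN0 (S M) ltac:(lia)). pose proof (HN0 (S N) ltac:(lia)).
  unfold bisum. fold g.
  replace (Cminus _ _) with (Cplus (Cminus (sum_neg g M) (Clim (sum_neg g)))
                                   (Cminus (sum_pos g N) (Clim (sum_pos g)))) by ring.
  eapply Rle_lt_trans; [apply Cmod_triangle | lra].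
Qed.
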